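(* Let $R$ be a weakly bleached local ring and let $s=\sum_{i=1}^{\infty}s_ix^i\in R[[x]]$ be central in $R[[x]]$ with $s\in J\big(R[[x]]\big)$. Let $s_0$ denote the constant term of $s$. For $A(x)\in M_2\big(R[[x]];s\big)$ the following are equivalent: (1) $A(x)$ is strongly $J$-clean in $M_2\big(R[[x]];s\big)$; (2) $A(0)$ is strongly $J$-clean in $M_2(R;s_0)$.
   Context: All rings are associative with identity. A ring $R$ is local if $R/J(R)$ is a division ring, where $J(R)$ is the Jacobson radical. A local ring $R$ is weakly bleached if for any $a\in J(R)$ and any $b\in 1+J(R)$ the additive maps $R\to R$, $r\mapsto br-ra$ and $r\mapsto ar-rb$, are both surjective. $R[[x]]$ is the formal power series ring; for a matrix $A(x)$ over $R[[x]]$, $A(0)$ is obtained by taking constant terms of all entries. For a ring $T$ and a central element $s\in T$, $M_2(T;s)$ denotes the ring whose elements are the $2\times 2$ arrays $\left[\begin{smallmatrix} a&b\\ c&d\end{smallmatrix}\right]$ with $a,b,c,d\in T$, with componentwise addition and multiplication $\left[\begin{smallmatrix} a&b\\ c&d\end{smallmatrix}\right]\left[\begin{smallmatrix} a'&b'\\ c'&d'\end{smallmatrix}\right]=\left[\begin{smallmatrix} aa'+s^2bc'&ab'+bd'\\ ca'+dc'&s^2cb'+dd'\end{smallmatrix}\right]$. An element $a$ of a ring $T$ is strongly $J$-clean if there is an idempotent $e\in T$ with $ae=ea$ and $a-e\in J(T)$. *)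

From mathcomp Require Import all_boot all_algebra.
Set Implicit Arguments. Unset Strict Implicit. Unset Printing Implicit Defensive.
Import GRing.Theory.
Local Open Scope ring_scope.

Section RingOps.
Variable T : Type.
Variables (one : T) (sub mul : T -> T -> T).

Definition is_unit_ops (x : T) := exists y, mul x y = one /\ mul y x = one.
Definition in_jac_ops (x : T) := forall r, is_unit_ops (sub one (mul r x)).
Definition central_ops (x : T) := forall r, mul x r = mul r x.
Definition idempotent_ops (e : T) := mul e e = e.
Definition strongly_J_clean_ops (a : T) :=
  exists e, [/\ idempotent_ops e, mul a e = mul e a & in_jac_ops (sub a e)].
End RingOps.

Definition rsub (R : pzRingType) (a b : R) := a - b.
Definition in_jac (R : pzRingType) (x : R) := in_jac_ops 1 (@rsub R) *%R x.

(* R local: R/J(R) is a division ring, i.e. 1 is not in J(R) (the quotient is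
   nonzero) and every element outside J(R) is invertible modulo J(R). *)
Definition local_ring (R : pzRingType) :=
  ~ in_jac (1 : R) /\
  forall a : R, ~ in_jac a ->
    exists b : R, in_jac (a * b - 1) /\ in_jac (b * a - 1).

Definition weakly_bleached (R : pzRingType) :=
  local_ring R /\
  forall a b : R, in_jac a -> in_jac (b - 1) ->
    (forall y : R, exists r : R, b * r - r * a = y) /\
    (forall y : R, exists r : R, a * r - r * b = y).

Definition pseries (R : Type) := nat -> R.
Section PSeries.
Variable R : pzRingType.
Definition ps_one : pseries R := fun n => (n == 0)%:R.
Definition ps_zero : pseries R := fun _ => 0.
Definition ps_add (f g : pseries R) : pseries R := fun n => f n + g n.
Definition ps_sub (f g : pseries R) : pseries R := fun n => f n - g n.
Definition ps_mul (f g : pseries R) : pseries R :=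
  fun n => \sum_(i < n.+1) f i * g (n - i)%N.
Definition ps_in_jac (f : pseries R) := in_jac_ops ps_one ps_sub ps_mul f.
Definition ps_central (f : pseries R) := central_ops ps_mul f.
End PSeries.

Record mx2 (T : Type) := Mx2 { m11 : T; m12 : T; m21 : T; m22 : T }.
Definition mx2_map (T U : Type) (f : T -> U) (A : mx2 T) : mx2 U :=
  Mx2 (f (m11 A)) (f (m12 A)) (f (m21 A)) (f (m22 A)).

Section M2.
Variable T : Type.
Variables (zero one : T) (add sub mul : T -> T -> T).
Definition mx2_one : mx2 T := Mx2 one zero zero one.
Definition mx2_sub (A B : mx2 T) : mx2 T :=
  Mx2 (sub (m11 A) (m11 B)) (sub (m12 A) (m12 B))
      (sub (m21 A) (m21 B)) (sub (m22 A) (m22 B)).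
Definition mx2_mul (s : T) (A B : mx2 T) : mx2 T :=
  Mx2 (add (mul (m11 A) (m11 B)) (mul (mul s s) (mul (m12 A) (m21 B))))
      (add (mul (m11 A) (m12 B)) (mul (m12 A) (m22 B)))
      (add (mul (m21 A) (m11 B)) (mul (m22 A) (m21 B)))
      (add (mul (mul s s) (mul (m21 A) (m12 B))) (mul (m22 A) (m22 B))).
Definition mx2_sJclean (s : T) (A : mx2 T) :=
  strongly_J_clean_ops mx2_one mx2_sub (mx2_mul s) A.
End M2.

Definition sJclean_M2 (R : pzRingType) (s : R) (A : mx2 R) :=
  mx2_sJclean 0 1 +%R (@rsub R) *%R s A.
Definition sJclean_M2_ps (R : pzRingType) (s : pseries R) (A : mx2 (pseries R)) :=
  mx2_sJclean (@ps_zero R) (@ps_one R) (@ps_add R) (@ps_sub R) (@ps_mul R) s A.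

(* For s in J(T), the diagonal entries of an idempotent of M_2(T; s) are
   idempotent modulo J(T), and J(M_2(T; s)) consists of the matrices whose
   diagonal lies in J(T).  As idempotents modulo J(R) of a local ring R lie
   in J(R) or 1 + J(R), so do the diagonal entries of a strongly J-clean
   A(0).  Power series whose constant term is in J (resp. a unit) are in J
   (resp. units), so when both entries lie on the same side the idempotent
   0 or 1 works for A(x).  In the mixed case [a in J, d in 1 + J] (the other
   one follows by swapping rows and columns), U = [1 u; v 1] conjugates A
   to a diagonal matrix as soon as
     a u + b = u (s^2 c u + d)   and   d v + c = v (s^2 b v + a),
   and then U diag(0, 1) U^-1 is the required idempotent.  Since s(0) = 0,
   the n-th coefficients of these equations are linear in u_n, resp. v_n,
   with linear parts r |-> a_0 r - r d_0 and r |-> d_0 r - r a_0, which weak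
   bleachedness makes surjective; so they are solved coefficient by
   coefficient.  The converse holds because taking constant terms is a
   surjective ring morphism. *)

From HB Require Import structures.
From mathcomp Require Import all_boot all_algebra.
From mathcomp Require Import boolp zify.
Set Implicit Arguments. Unset Strict Implicit. Unset Printing Implicit Defensive.
Import GRing.Theory.
Local Open Scope ring_scope.

Section JacobsonRadical.
Variable T : pzRingType.
Implicit Types a e j x y : T.

Definition is_unit x := is_unit_ops 1 *%R x.
Definition sJclean a := strongly_J_clean_ops 1 (@rsub T) *%R a.

Lemma is_unit1 : is_unit 1.
Proof. by exists 1; rewrite mulr1. Qed.

Lemma is_unitM x y : is_unit x -> is_unit y -> is_unit (x * y).
Proof.
move=> [x' [xx' x'x]] [y' [yy' y'y]]; exists (y' * x'); split.
  by rewrite mulrA -(mulrA x) yy' mulr1.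
by rewrite mulrA -(mulrA y') x'x mulr1.
Qed.

(* Jacobson's lemma: if u inverts 1 - xy then 1 + y u x inverts 1 - yx. *)
Lemma is_unit_1subC x y : is_unit (1 - x * y) -> is_unit (1 - y * x).
Proof.
move=> [u [hu hu']]; exists (1 + y * u * x); split.
  rewrite mulrDr mulr1 mulrBl mul1r.
  have ->: y * u * x - y * x * (y * u * x) = y * ((1 - x * y) * u) * x.
    by rewrite mulrBl mul1r mulrBr mulrBl !mulrA.
  by rewrite hu mulr1 subrK.
have yuxyx : y * u * x * (y * x) = y * u * x - y * x.
  have {2}->: y * x = y * (u * (1 - x * y)) * x by rewrite hu' mulr1.
  by rewrite mulrBr mulr1 mulrBr mulrBl !mulrA opprB addrC subrK.
by rewrite mulrBr mulr1 mulrDl mul1r yuxyx [y * x + _]addrC subrK addrK.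
Qed.

Lemma in_jac0 : in_jac (0 : T).
Proof. by move=> r; rewrite /rsub mulr0 subr0; apply: is_unit1. Qed.

Lemma in_jacMl x j : in_jac j -> in_jac (x * j).
Proof. by move=> hj r; rewrite mulrA. Qed.

Lemma in_jacMr x j : in_jac j -> in_jac (j * x).
Proof.
by move=> hj r; rewrite mulrA; apply: is_unit_1subC; rewrite mulrA; apply: hj.
Qed.

Lemma in_jacN j : in_jac j -> in_jac (- j).
Proof. by move=> hj r; rewrite /rsub mulrN -mulNr; apply: hj. Qed.

Lemma in_jacD j j' : in_jac j -> in_jac j' -> in_jac (j + j').
Proof.
move=> hj hj' r; have [v [hv _]] := hj r.
have ->: rsub 1 (r * (j + j')) = (1 - r * j) * (1 - v * r * j').
  by rewrite /rsub mulrBr mulr1 !mulrA hv mul1r mulrDr opprD addrA.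
by apply: is_unitM; [apply: hj | apply: hj'].
Qed.

Lemma in_jacB j j' : in_jac j -> in_jac j' -> in_jac (j - j').
Proof. by move=> hj hj'; apply/in_jacD/in_jacN. Qed.

Lemma is_unit_jac1 x : in_jac (x - 1) -> is_unit x.
Proof. by move=> /(_ (-1)); rewrite /rsub mulN1r opprK addrC subrK. Qed.

Lemma sJclean_jac a : in_jac a -> sJclean a.
Proof. by exists 0; split; rewrite /idempotent_ops /rsub ?mulr0 ?mul0r ?subr0. Qed.

Lemma sJclean_jac1 a : in_jac (a - 1) -> sJclean a.
Proof. by exists 1; split; rewrite /idempotent_ops ?mulr1 ?mul1r. Qed.

Lemma local_jac_or_jac1 e : local_ring T -> in_jac (e * e - e) ->
  in_jac e \/ in_jac (e - 1).
Proof.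
move=> [_ hloc] he; case: (EM (in_jac e)) => [|/hloc [b [_ hbe]]]; [by left | right].
have ->: e - 1 = b * (e * e - e) - (b * e - 1) * (e - 1).
  rewrite !mulrBr !mulrBl !mulrA mul1r !mulr1.
  by rewrite opprB addrA subrKA opprB addrC subrKA.
by apply: in_jacB; [apply: in_jacMl | apply: in_jacMr].
Qed.

End JacobsonRadical.

Section SurjectiveMorphism.
Variables (T U : pzRingType) (f : T -> U).
Hypotheses (f1 : f 1 = 1) (fB : forall x y, f (x - y) = f x - f y)
  (fM : forall x y, f (x * y) = f x * f y) (f_surj : forall y, exists x, f x = y).

Lemma is_unit_map x : is_unit x -> is_unit (f x).
Proof. by move=> [y [xy yx]]; exists (f y); rewrite -!fM xy yx f1. Qed.

Lemma in_jac_map j : in_jac j -> in_jac (f j).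
Proof.
move=> hj r; have [r' <-] := f_surj r.
by have := is_unit_map (hj r'); rewrite /rsub fB fM f1.
Qed.

Lemma sJclean_map a : sJclean a -> sJclean (f a).
Proof.
move=> [e [ee ae hae]]; exists (f e); split.
- by rewrite /idempotent_ops -fM ee.
- by rewrite -!fM ae.
- by rewrite /rsub -fB; apply: in_jac_map.
Qed.

End SurjectiveMorphism.

Record central_elt (T : pzRingType) := CentralElt {
  celt : T;
  celtC : forall r, celt * r = r * celt }.

Definition M2 (T : pzRingType) (cs : central_elt T) := mx2 T.

Section TwistedMatrixRing.
Variables (T : pzRingType) (cs : central_elt T).
Local Notation s := (celt cs).
Local Notation M := (M2 cs).
Implicit Types A B C X Y : M.

Lemma mx2P (A B : mx2 T) : m11 A = m11 B -> m12 A = m12 B ->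
  m21 A = m21 B -> m22 A = m22 B -> A = B.
Proof. by case: A; case: B => /= ? ? ? ? ? ? ? ? -> -> -> ->. Qed.

Lemma mulr_ssC (x y : T) : x * (s * s * y) = s * s * (x * y).
Proof.
have ssC : s * s * x = x * (s * s) by rewrite -mulrA celtC (celtC cs x) -mulrA.
by rewrite mulrA -ssC -mulrA.
Qed.

HB.instance Definition _ := gen_eqMixin M.
HB.instance Definition _ := gen_choiceMixin M.

Definition m2zero : M := Mx2 0 0 0 0.
Definition m2add A B : M :=
  Mx2 (m11 A + m11 B) (m12 A + m12 B) (m21 A + m21 B) (m22 A + m22 B).
Definition m2opp A : M := Mx2 (- m11 A) (- m12 A) (- m21 A) (- m22 A).

Lemma m2addA : associative m2add.
Proof. by move=> A B C; apply: mx2P => /=; rewrite addrA. Qed.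
Lemma m2addC : commutative m2add.
Proof. by move=> A B; apply: mx2P => /=; rewrite addrC. Qed.
Lemma m2add0 : left_id m2zero m2add.
Proof. by move=> A; apply: mx2P => /=; rewrite add0r. Qed.
Lemma m2addN : left_inverse m2zero m2opp m2add.
Proof. by move=> A; apply: mx2P => /=; rewrite addNr. Qed.

HB.instance Definition _ := GRing.isZmodule.Build M m2addA m2addC m2add0 m2addN.

Definition m2one : M := mx2_one 0 1.
Definition m2mul A B : M := mx2_mul +%R *%R s A B.

Lemma m2mulA : associative m2mul.
Proof.
move=> [a b c d] [a' b' c' d'] [a'' b'' c'' d'']; apply: mx2P => /=;
by rewrite !mulrDl !mulrDr !mulr_ssC !mulrA addrACA.
Qed.
Lemma m2mul1 : left_id m2one m2mul.
Proof.
by move=> [a b c d]; apply: mx2P => /=; rewrite !mul1r !mul0r ?mulr0 ?addr0 ?add0r.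
Qed.
Lemma m2mulr1 : right_id m2one m2mul.
Proof.
by move=> [a b c d]; apply: mx2P => /=; rewrite !mulr1 !mulr0 ?addr0 ?add0r.
Qed.
Lemma m2mulDl : left_distributive m2mul m2add.
Proof.
move=> [a b c d] [a' b' c' d'] [a'' b'' c'' d'']; apply: mx2P => /=;
by rewrite ?mulrDl ?mulrDr addrACA.
Qed.
Lemma m2mulDr : right_distributive m2mul m2add.
Proof.
move=> [a b c d] [a' b' c' d'] [a'' b'' c'' d'']; apply: mx2P => /=;
by rewrite ?mulrDl ?mulrDr addrACA.
Qed.

HB.instance Definition _ :=
  GRing.Zmodule_isPzRing.Build M m2mulA m2mul1 m2mulr1 m2mulDl m2mulDr.

Definition mx2_swap A : M := Mx2 (m22 A) (m21 A) (m12 A) (m11 A).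

Lemma mx2_swapK : involutive mx2_swap.
Proof. by case. Qed.

Lemma mx2_swapM A B : mx2_swap (A * B) = mx2_swap A * mx2_swap B.
Proof. by apply: mx2P; rewrite /= addrC. Qed.

Lemma mx2_swap_surj Y : exists X, mx2_swap X = Y.
Proof. by exists (mx2_swap Y); rewrite mx2_swapK. Qed.

Lemma in_jac_swap X : in_jac X -> in_jac (mx2_swap X).
Proof.
exact: (in_jac_map (f := mx2_swap) erefl (fun _ _ => erefl) mx2_swapM mx2_swap_surj).
Qed.

Lemma sJclean_swap A : sJclean A -> sJclean (mx2_swap A).
Proof.
exact: (sJclean_map (f := mx2_swap) erefl (fun _ _ => erefl) mx2_swapM mx2_swap_surj).
Qed.

Lemma is_unit_M2_triu (a b : T) : is_unit (Mx2 a b 0 1 : M) -> is_unit a.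
Proof.
move=> [Y [UY YU]]; exists (m11 Y).
have /= Y21 := congr1 (@m21 T) UY; have /= UY11 := congr1 (@m11 T) UY.
have /= YU11 := congr1 (@m11 T) YU.
move: Y21 UY11 YU11; rewrite !mul0r !mul1r add0r => ->.
by rewrite !mulr0 !addr0.
Qed.

Lemma in_jac_M2_11 X : in_jac X -> in_jac (m11 X).
Proof.
move=> hX r; apply: (@is_unit_M2_triu _ (- (r * m12 X))).
have -> : Mx2 (rsub 1 (r * m11 X)) (- (r * m12 X)) 0 1
          = 1 - (Mx2 r 0 0 0 : M) * X.
  by apply: mx2P; rewrite /= !mul0r ?mulr0 ?addr0 ?subr0 ?sub0r ?oppr0.
exact: hX.
Qed.

Lemma in_jac_M2_22 X : in_jac X -> in_jac (m22 X).
Proof. by move/in_jac_swap/in_jac_M2_11. Qed.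

Hypothesis s_jac : in_jac s.

Lemma in_jac_ss : in_jac (s * s).
Proof. exact: in_jacMr. Qed.

Lemma in_jac_diagMl Y X : in_jac (m11 X) -> in_jac (m22 X) ->
  in_jac (m11 (Y * X)) /\ in_jac (m22 (Y * X)).
Proof.
move=> h11 h22; split=> /=.
  by apply: in_jacD; [apply: in_jacMl | apply/in_jacMr/in_jac_ss].
by apply: in_jacD; [apply/in_jacMr/in_jac_ss | apply: in_jacMl].
Qed.

(* The inverse is built from the Schur complement [de - s^2 ga al^-1 be] of [al]. *)
Lemma M2_left_inv_diag1 X : in_jac (m11 X - 1) -> in_jac (m22 X - 1) ->
  exists Y, Y * X = 1.
Proof.
case: X => al be ga de /= hal hde.
have [al' [alal' al'al]] := is_unit_jac1 hal.
pose De := de - s * s * (ga * (al' * be)).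
have [De' [DeDe' De'De]] : is_unit De.
  apply: is_unit_jac1; rewrite /De addrAC.
  by apply: in_jacB => //; apply/in_jacMr/in_jac_ss.
have deE : de = De + s * s * (ga * (al' * be)) by rewrite /De subrK.
exists (Mx2 (al' + s * s * (al' * be * De' * ga * al')) (- (al' * be * De'))
            (- (De' * ga * al')) De').
apply: mx2P => /=.
- rewrite mulrDl al'al !mulNr !mulrN -!mulrA al'al mulr1.
  by rewrite -addrA subrr addr0.
- rewrite mulNr -[al' * be * De' * de]mulrA deE mulrDr De'De mulr_ssC mulrDr mulr1.
  by rewrite mulr_ssC mulrDl !mulrA opprD addrACA !subrr addr0.
- by rewrite mulNr -mulrA al'al mulr1 addNr.
- rewrite deE mulrDr De'De mulr_ssC mulNr mulrN !mulrA.
  by rewrite addrCA addNr addr0.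
Qed.

Lemma is_unit_M2_diag1 X : in_jac (m11 X - 1) -> in_jac (m22 X - 1) -> is_unit X.
Proof.
move=> h11 h22; have [Y YX] := M2_left_inv_diag1 h11 h22.
have [hY11 hY22] : in_jac (m11 Y - 1) /\ in_jac (m22 Y - 1).
  have YE : Y - 1 = - (Y * (X - 1)) by rewrite mulrBr mulr1 YX opprB.
  have [hYX11 hYX22] := @in_jac_diagMl Y (X - 1) h11 h22.
  split; [change (in_jac (m11 (Y - 1))) | change (in_jac (m22 (Y - 1)))];
    by rewrite YE; apply: in_jacN.
have [Z ZY] := M2_left_inv_diag1 hY11 hY22.
have ZE : Z = X by rewrite -[Z]mulr1 -YX mulrA ZY mul1r.
by exists Y; split => //; rewrite -ZE.
Qed.

Lemma in_jac_M2E X : in_jac X <-> in_jac (m11 X) /\ in_jac (m22 X).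
Proof.
split=> [hX | [h11 h22] r]; first by split; [apply: in_jac_M2_11 | apply: in_jac_M2_22].
have [hr11 hr22] := in_jac_diagMl r h11 h22.
by apply: is_unit_M2_diag1; rewrite /= addrC addKr; apply: in_jacN.
Qed.

Lemma sJclean_M2_diag11 A : local_ring T -> sJclean A ->
  in_jac (m11 A) \/ in_jac (m11 A - 1).
Proof.
move=> hloc [E [EE _ /in_jac_M2_11 hAE]].
have : in_jac (m11 E * m11 E - m11 E).
  have /= EE11 := congr1 (@m11 T) EE.
  have -> : m11 E * m11 E - m11 E = - (s * s * (m12 E * m21 E)).
    by rewrite -{3}EE11 opprD addrA subrr add0r.
  exact/in_jacN/in_jacMr/in_jac_ss.
case/(local_jac_or_jac1 hloc) => hE; [left | right].
- by rewrite -(subrK (m11 E) (m11 A)); apply: in_jacD.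
- by rewrite -(subrK (m11 E) (m11 A)) -addrA; apply: in_jacD.
Qed.

Lemma sJclean_M2_diag A : local_ring T -> sJclean A ->
  (in_jac (m11 A) \/ in_jac (m11 A - 1)) /\ (in_jac (m22 A) \/ in_jac (m22 A - 1)).
Proof.
move=> hloc hA; split; first exact: sJclean_M2_diag11.
exact: (sJclean_M2_diag11 hloc (sJclean_swap hA)).
Qed.

Lemma sJclean_M2_jac A : in_jac (m11 A) -> in_jac (m22 A) -> sJclean A.
Proof. by move=> h11 h22; apply/sJclean_jac/in_jac_M2E. Qed.

Lemma sJclean_M2_jac1 A : in_jac (m11 A - 1) -> in_jac (m22 A - 1) -> sJclean A.
Proof. by move=> h11 h22; apply/sJclean_jac1/in_jac_M2E. Qed.

Lemma sJclean_M2_mixed (a b c d u v : T) : in_jac a -> in_jac (d - 1) ->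
  a * u + b = u * (s * s * (c * u) + d) ->
  d * v + c = v * (s * s * (b * v) + a) ->
  sJclean (Mx2 a b c d : M).
Proof.
move=> ha hd hu hv.
pose A : M := Mx2 a b c d; pose U : M := Mx2 1 u v 1.
pose D : M := Mx2 (s * s * (b * v) + a) 0 0 (s * s * (c * u) + d).
pose P : M := Mx2 0 0 0 1.
have [W [UW WU]] : is_unit U.
  by apply: is_unit_M2_diag1; rewrite /= subrr; apply: in_jac0.
have AU : A * U = U * D.
  apply: mx2P => /=; rewrite ?(mulr1, mul1r, mulr0, addr0, add0r) //;
  by rewrite addrC.
have WA : W * A = D * W.
  by rewrite -[W * A]mulr1 -UW mulrA -(mulrA W) AU mulrA WU mul1r.
have DP : D * P = P * D.
  by apply: mx2P => /=; rewrite ?(mulr1, mul1r, mulr0, mul0r, addr0, add0r).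
have PP : P * P = P.
  by apply: mx2P => /=; rewrite ?(mulr1, mul1r, mulr0, mul0r, addr0, add0r).
exists (U * P * W); split.
- by rewrite /idempotent_ops -!mulrA (mulrA W U) WU mul1r (mulrA P P) PP.
- by rewrite !mulrA AU -(mulrA U D) DP mulrA -!mulrA WA.
have -> : rsub A (U * P * W) = (A - P) + (P * U - U * P) * W.
  by rewrite /rsub mulrBl -(mulrA P U W) UW mulr1 addrA subrK.
apply: in_jacD; first by apply/in_jac_M2E; rewrite /= subr0.
apply/in_jacMr/in_jac_M2E.
rewrite /= ?(mulr1, mul1r, mulr0, mul0r, addr0, add0r) oppr0 subrr.
by split; apply: in_jac0.
Qed.

End TwistedMatrixRing.

Section PowerSeriesRing.
Variable R : pzRingType.
Local Notation P := (pseries R).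
Implicit Types f g h : P.

HB.instance Definition _ := gen_eqMixin P.
HB.instance Definition _ := gen_choiceMixin P.

Definition ps_opp f : P := fun n => - f n.

Lemma psP f g : f =1 g -> f = g.
Proof. exact: funext. Qed.

Lemma ps_addA : associative (@ps_add R).
Proof. by move=> f g h; apply: psP => n; rewrite /ps_add addrA. Qed.
Lemma ps_addC : commutative (@ps_add R).
Proof. by move=> f g; apply: psP => n; rewrite /ps_add addrC. Qed.
Lemma ps_add0 : left_id (@ps_zero R) (@ps_add R).
Proof. by move=> f; apply: psP => n; rewrite /ps_add /ps_zero add0r. Qed.
Lemma ps_addN : left_inverse (@ps_zero R) ps_opp (@ps_add R).
Proof. by move=> f; apply: psP => n; rewrite /ps_add /ps_zero /ps_opp addNr. Qed.

HB.instance Definition _ := GRing.isZmodule.Build P ps_addA ps_addC ps_add0 ps_addN.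

Lemma ps_mulA : associative (@ps_mul R).
Proof.
move=> f g h; apply: psP => n; rewrite /ps_mul /=; symmetry.
under eq_bigr do rewrite mulr_suml.
under [RHS]eq_bigr do rewrite mulr_sumr.
transitivity (\sum_(k < n.+1) \sum_(i < n.+1 | (i < k.+1)%N)
                f i * g (k - i)%N * h (n - k)%N).
  apply: eq_bigr => k _.
  by rewrite (big_ord_widen n.+1 (fun i : nat => f i * g (k - i)%N * h (n - k)%N)).
rewrite (exchange_big_dep predT) //=; apply: eq_bigr => i _; symmetry.
transitivity (\sum_(0 <= j < n.+1 - i)
                (fun k => f i * g (k - i)%N * h (n - k)%N) (j + i)%N).
  rewrite subSn; last by rewrite -ltnS.
  rewrite big_mkord; apply: eq_bigr => j _ /=.
  by rewrite addnK -mulrA subnDA subnAC.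
rewrite -(big_addn 0 n.+1 i predT (fun k => f i * g (k - i)%N * h (n - k)%N)).
by rewrite add0n big_geq_mkord; apply: eq_bigl.
Qed.

Lemma ps_mul1 : left_id (@ps_one R) (@ps_mul R).
Proof.
move=> f; apply: psP => n; rewrite /ps_mul /ps_one big_ord_recl /= mul1r subn0.
by rewrite big1 ?addr0 // => i _; rewrite mul0r.
Qed.
Lemma ps_mulr1 : right_id (@ps_one R) (@ps_mul R).
Proof.
move=> f; apply: psP => n; rewrite /ps_mul /ps_one big_ord_recr /= subnn mulr1.
by rewrite big1 ?add0r // => i _ /=; rewrite subn_eq0 leqNgt ltn_ord /= mulr0.
Qed.
Lemma ps_mulDl : left_distributive (@ps_mul R) (@ps_add R).
Proof.
move=> f g h; apply: psP => n; rewrite /ps_mul /ps_add -big_split /=.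
by apply: eq_bigr => i _; rewrite mulrDl.
Qed.
Lemma ps_mulDr : right_distributive (@ps_mul R) (@ps_add R).
Proof.
move=> f g h; apply: psP => n; rewrite /ps_mul /ps_add -big_split /=.
by apply: eq_bigr => i _; rewrite mulrDr.
Qed.

HB.instance Definition _ :=
  GRing.Zmodule_isPzRing.Build P ps_mulA ps_mul1 ps_mulr1 ps_mulDl ps_mulDr.

Lemma ps_addE f g n : (f + g) n = f n + g n.
Proof. by []. Qed.

Lemma ps_mul_coef0 f g : (f * g) 0%N = f 0%N * g 0%N.
Proof. exact: big_ord1. Qed.

Lemma ps_mul_coefr f g n :
  (f * g) n = f n * g 0%N + \sum_(i < n) f i * g (n - i)%N.
Proof. by rewrite [LHS]big_ord_recr /= subnn addrC. Qed.

Lemma ps_mul_coefl f g n :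
  (f * g) n = f 0%N * g n + \sum_(i < n) f i.+1 * g (n - i.+1)%N.
Proof. by rewrite [LHS]big_ord_recl /= subn0. Qed.

Definition agree_below n f g := forall i, (i < n)%N -> f i = g i.

Lemma agree_below_mull h f g n : agree_below n f g -> agree_below n (h * f) (h * g).
Proof.
move=> fg i ltin; apply: eq_bigr => k _; congr (_ * _).
by apply: fg; apply: leq_ltn_trans (leq_subr _ _) ltin.
Qed.

Lemma agree_below_mull_coef0 h f g n : h 0%N = 0 ->
  agree_below n f g -> agree_below n.+1 (h * f) (h * g).
Proof.
move=> h0 fg i ltin; rewrite !ps_mul_coefl h0 !mul0r !add0r.
by apply: eq_bigr => k _; rewrite fg //; have := ltn_ord k; lia.
Qed.

Lemma ps_solve_rec (L : R -> R) (F : P -> nat -> R) :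
  (forall y, exists r, L r = y) ->
  (forall f g n, agree_below n f g -> F f n = F g n) ->
  exists u : P, forall n, L (u n) = F u n.
Proof.
move=> L_surj F_local; have [pick pickP] := choice L_surj.
pose step g : P := fun n => pick (F g n).
pose approx := fix approx k := if k is k'.+1 then step (approx k') else (0 : P).
have approx_stable i k m : (i < k)%N -> (k <= m)%N -> approx m i = approx k i.
  elim/ltn_ind: i k m => i IH [|k] [|m] //= ltik lekm.
  by rewrite /step (F_local (approx m) (approx k)) // => j ltji; apply: IH; lia.
exists (fun i => approx i.+1 i) => n /=.
rewrite /step pickP; apply: F_local => j ltjn /=.
by rewrite (approx_stable j j.+1 n) //; lia.
Qed.

Lemma is_unit_ps f : is_unit (f 0%N) -> is_unit f.
Proof.
move=> [f0' [f0f0' f0'f0]].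
have [g fg] : exists g, f * g = 1.
  have [y|g1 g2 n g12|g hg] := @ps_solve_rec (fun r => f 0%N * r)
      (fun g n => (1 : P) n - \sum_(i < n) f i.+1 * g (n - i.+1)%N).
  - by exists (f0' * y); rewrite mulrA f0f0' mul1r.
  - congr (_ - _); apply: eq_bigr => i _.
    by rewrite g12 //; have := ltn_ord i; lia.
  by exists g; apply: psP => n; rewrite ps_mul_coefl hg subrK.
have [k kf] : exists k, k * f = 1.
  have [y|g1 g2 n g12|k hk] := @ps_solve_rec (fun r => r * f 0%N)
      (fun g n => (1 : P) n - \sum_(i < n) g i * f (n - i)%N).
  - by exists (y * f0'); rewrite -mulrA f0'f0 mulr1.
  - by congr (_ - _); apply: eq_bigr => i _; rewrite g12.
  by exists k; apply: psP => n; rewrite ps_mul_coefr hk subrK.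
have kg : k = g by rewrite -[k]mulr1 -fg mulrA kf mul1r.
by exists g; split => //; rewrite -kg.
Qed.

Lemma in_jac_ps f : in_jac (f 0%N) -> in_jac f.
Proof.
move=> hf r; apply: is_unit_ps.
by change (is_unit (1 - (r * f) 0%N)); rewrite ps_mul_coef0; apply: hf.
Qed.

Lemma ps_riccati (s p q m rhs : P) : s 0%N = 0 ->
  (forall y, exists r, q 0%N * r - r * p 0%N = y) ->
  exists u, q * u + rhs = u * (s * s * (m * u) + p).
Proof.
move=> s0 hsurj.
have ss0 : (s * s) 0%N = 0 by rewrite ps_mul_coef0 s0 mul0r.
have ssm0 g : (s * s * (m * g)) 0%N = 0 by rewrite ps_mul_coef0 ss0 mul0r.
pose F g n := (g * (s * s * (m * g))) n + \sum_(i < n) g i * p (n - i)%N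
  - (\sum_(i < n) q i.+1 * g (n - i.+1)%N + rhs n).
have [g h n gh|u hu] := @ps_solve_rec (fun r => q 0%N * r - r * p 0%N) F hsurj.
  rewrite /F (ps_mul_coefr g) (ps_mul_coefr h) !ssm0 !mulr0 !add0r.
  congr (_ + _ - (_ + _)); apply: eq_bigr => i _.
  - have ssmgh := agree_below_mull_coef0 ss0 (agree_below_mull m gh).
    by rewrite gh // ssmgh // ltnS leq_subr.
  - by rewrite gh.
  - by rewrite gh //; have := ltn_ord i; lia.
exists u; apply: psP => n.
have := hu n; rewrite /F => /(canRL (subrK _)).
rewrite mulrDr !ps_addE (ps_mul_coefl q u) (ps_mul_coefr u p) => ->.
by rewrite -addrA addrAC subrK -addrA (addrC (u n * _)).
Qed.

End PowerSeriesRing.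

Lemma mul0rC (T : pzRingType) (r : T) : 0 * r = r * 0.
Proof. by rewrite mul0r mulr0. Qed.

Definition central0 (T : pzRingType) : central_elt T := CentralElt (@mul0rC T).

Section ConstantTerm.
Variables (R : pzRingType) (cs : central_elt (pseries R)).
Hypothesis cs0 : celt cs 0%N = 0.
Local Notation M := (M2 cs).
Local Notation M0 := (M2 (central0 R)).

Definition coef0_mx (A : M) : M0 := mx2_map (fun f : pseries R => f 0%N) A.

Lemma coef0_mxM A B : coef0_mx (A * B) = coef0_mx A * coef0_mx B.
Proof. by apply: mx2P; rewrite /= !ps_addE !ps_mul_coef0 ?cs0 ?mul0r. Qed.

Lemma coef0_mx_surj Y : exists X, coef0_mx X = Y.
Proof. by exists (mx2_map (fun x n => if n is 0%N then x else 0) Y); case: Y. Qed.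

Lemma sJclean_coef0_mx A : sJclean A -> sJclean (coef0_mx A).
Proof.
exact: (sJclean_map (f := coef0_mx) erefl (fun _ _ => erefl) coef0_mxM coef0_mx_surj).
Qed.

Hypothesis s_jac : in_jac (celt cs).

Lemma sJclean_M2_ps_mixed (a b c d : pseries R) : weakly_bleached R ->
  in_jac (a 0%N) -> in_jac (d 0%N - 1) -> sJclean (Mx2 a b c d : M).
Proof.
move=> [_ wb_surj] ha hd; have [surj_da surj_ad] := wb_surj _ _ ha hd.
have [u hu] := ps_riccati c b cs0 surj_ad.
have [v hv] := ps_riccati b c cs0 surj_da.
by apply: (sJclean_M2_mixed s_jac _ _ hu hv); apply: in_jac_ps.
Qed.

End ConstantTerm.

Theorem theorem2p18 (R : pzRingType) (s : pseries R) (A : mx2 (pseries R)) :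
  weakly_bleached R ->
  ps_central s ->
  ps_in_jac s ->
  s 0%N = 0 ->
  (sJclean_M2_ps s A <-> sJclean_M2 (s 0%N) (mx2_map (fun f : pseries R => f 0%N) A)).
Proof.
move=> wbR s_central s_jac s0; pose cs := CentralElt s_central.
have cs_jac : in_jac (celt cs) := s_jac.
rewrite s0; change (sJclean (A : M2 cs) <-> sJclean (coef0_mx (cs := cs) A)).
split; first exact: sJclean_coef0_mx.
have local0 := @sJclean_M2_diag _ (central0 R) (@in_jac0 R) _ wbR.1.
case: A => a b c d /local0 /= [[ha|ha] [hd|hd]].
- by apply: (sJclean_M2_jac cs_jac); apply: in_jac_ps.
- exact: sJclean_M2_ps_mixed.
- rewrite -[Mx2 a b c d](@mx2_swapK _ cs); apply: sJclean_swap.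
  exact: sJclean_M2_ps_mixed.
- by apply: (sJclean_M2_jac1 cs_jac); apply: in_jac_ps.
Qed.
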